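(* Let $A,B$ be Hermitian operators on a finite-dimensional Hilbert space $\mathbb{S}_1\oplus\mathbb{S}_2$ (with $\mathbb{S}_1,\mathbb{S}_2$ orthogonal and $\mathbb{S}_i$ also denoting the orthogonal projector onto it). Suppose $A$ is invertible, $A=\mathbb{S}_1A\mathbb{S}_1+\mathbb{S}_2A\mathbb{S}_2$, and for positive numbers $G_1,G_2$: $$\|\mathbb{S}_1A^{-1}\mathbb{S}_1\|<1/G_1,\quad \|\mathbb{S}_2A^{-1}\mathbb{S}_2\|<1/G_2,$$ $$b_{11}=\|\mathbb{S}_1B\mathbb{S}_1\|<G_1/2,\quad b_{22}=\|\mathbb{S}_2B\mathbb{S}_2\|<G_2/2,\quad b_{12}=\|\mathbb{S}_1B\mathbb{S}_2\|<\min(G_1,G_2)/2.$$ Then $A-B$ is invertible, and $$\|\mathbb{S}_1(A-B)^{-1}\mathbb{S}_2\|<\frac{b_{12}}{(G_1-b_{11})(G_2-b_{22})-b_{12}^2},$$ $$\|\mathbb{S}_1(A-B)^{-1}\mathbb{S}_1\|<\frac{1}{G_1-b_{11}}\big(1+b_{12}\|\mathbb{S}_1(A-B)^{-1}\mathbb{S}_2\|\big),$$ $$\|\mathbb{S}_2(A-B)^{-1}\mathbb{S}_2\|<\frac{1}{G_2-b_{22}}\big(1+b_{12}\|\mathbb{S}_1(A-B)^{-1}\mathbb{S}_2\|\big).$$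
   Context: $\|\cdot\|$ denotes the operator 2-norm. *)

From HB Require Import structures.
From mathcomp Require Import all_boot all_order all_algebra.
From mathcomp Require Import complex.
From mathcomp Require Import boolp classical_sets reals.
Set Implicit Arguments. Unset Strict Implicit. Unset Printing Implicit Defensive.
Import Order.TTheory GRing.Theory Num.Theory.
Local Open Scope ring_scope.
Local Open Scope classical_set_scope.

Section Defs.
Variable R : realType.
Local Notation C := (R[i]).

Definition adjmx (n : nat) (A : 'M[C]_n) : 'M[C]_n := (map_mx (@conjc R) A)^T.

Definition herm_mx (n : nat) (A : 'M[C]_n) : Prop := adjmx A = A.

Definition orth_proj (n : nat) (P : 'M[C]_n) : Prop := herm_mx P /\ P *m P = P.

Definition vnorm (n : nat) (x : 'cV[C]_n) : R :=
  Num.sqrt (\sum_(i < n) ((@complex.Re R (x i 0)) ^+ 2 + (@complex.Im R (x i 0)) ^+ 2)).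

Definition opnorm (n : nat) (M : 'M[C]_n) : R :=
  sup [set vnorm (M *m x) | x in [set x : 'cV[C]_n | vnorm x <= 1]].
End Defs.

From HB Require Import structures.
From mathcomp Require Import all_boot all_order all_algebra.
From mathcomp Require Import complex.
From mathcomp Require Import boolp classical_sets reals.
From mathcomp Require Import ring lra.
Import Order.TTheory GRing.Theory Num.Theory.

(* Pick g_i > G_i with g_i ||S_i A^-1 S_i|| <= 1.  As A commutes with the
   projectors, ||S1 A v|| >= g1 ||S1 v||; splitting B v along S1 + S2 then gives
     ||S1 (A - B) v|| >= (g1 - b11) ||S1 v|| - b12 ||S2 v||,
   and symmetrically for S2, since ||S2 B S1|| = b12 for Hermitian B.  Applied
   to v in the kernel of A - B, or to v = (A - B)^-1 w with w in the range of
   S1 or S2, these two estimates form a diagonally dominant 2x2 system of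
   linear inequalities in ||S1 v|| and ||S2 v||; solving it gives
   invertibility and the three bounds, strict because g_i > G_i. *)

Set Implicit Arguments.
Unset Strict Implicit.
Unset Printing Implicit Defensive.

Local Open Scope ring_scope.

Section ComplexParts.
Variable R : rcfType.
Local Notation Re := (@complex.Re R).
Local Notation Im := (@complex.Im R).
Implicit Types a b : R[i].

Lemma ReD a b : Re (a + b) = Re a + Re b. Proof. by case: a b => ? ? []. Qed.
Lemma ImD a b : Im (a + b) = Im a + Im b. Proof. by case: a b => ? ? []. Qed.
Lemma ReM a b : Re (a * b) = Re a * Re b - Im a * Im b.
Proof. by case: a b => ? ? []. Qed.
Lemma ImM a b : Im (a * b) = Re a * Im b + Im a * Re b.
Proof. by case: a b => ? ? []. Qed.
Lemma ReJ a : Re (conjc a) = Re a. Proof. by case: a. Qed.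
Lemma ImJ a : Im (conjc a) = - Im a. Proof. by case: a. Qed.

Lemma Re_sum (I : Type) (r : seq I) (P : pred I) (F : I -> R[i]) :
  Re (\sum_(i <- r | P i) F i) = \sum_(i <- r | P i) Re (F i).
Proof. exact: (big_morph _ ReD (erefl : Re 0 = 0)). Qed.

End ComplexParts.

Section RealInequalities.
Variable R : realFieldType.
Implicit Types a b c p q G N : R.

Lemma ler_of_sqr_le_mul a b : 0 <= a -> 0 <= b -> a ^+ 2 <= b * a -> a <= b.
Proof. by move=> *; nra. Qed.

Lemma exists_gt_mul_le1 G N : 0 < G -> 0 <= N -> N < G^-1 ->
  exists2 g, G < g & g * N <= 1.
Proof.
move=> G_gt0 N_ge0 N_lt; have [->|N_neq0] := eqVneq N 0.
  by exists (G + 1); rewrite ?mulr0 ?ler01 //; lra.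
have N_gt0 : 0 < N by rewrite lt0r N_neq0.
by exists N^-1; rewrite ?mulVf // -ltf_pV2 ?posrE ?invr_gt0 // invrK.
Qed.

Lemma coupled_le0_eq0 a b c p q : 0 <= b -> b < a -> b < c -> 0 <= p -> 0 <= q ->
  a * p - b * q <= 0 -> c * q - b * p <= 0 -> p = 0 /\ q = 0.
Proof. by move=> *; split; apply/eqP; rewrite eq_le; apply/andP; split; nra. Qed.

Lemma coupled_det_gt0 a b c : 0 <= b -> b < a -> b < c -> 0 < a * c - b ^+ 2.
Proof. by move=> *; nra. Qed.

Lemma coupled_le_diag_bound a b p q N : 0 < a -> 0 <= b -> q <= N ->
  a * p - b * q <= 1 -> p <= (1 + b * N) / a.
Proof.
move=> a_gt0 b_ge0 q_le ap_le; rewrite ler_pdivlMr // mulrC.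
by have := ler_wpM2l b_ge0 q_le; lra.
Qed.

Lemma coupled_le_offdiag_bound a b c p q : 0 <= b -> b < a -> b < c -> 0 <= q ->
  a * p - b * q <= 0 -> c * q - b * p <= 1 -> p <= b / (a * c - b ^+ 2).
Proof. by move=> *; rewrite ler_pdivlMr ?coupled_det_gt0 //; nra. Qed.

Lemma coupled_bound_lt a b c (a' c' : R) : 0 < b -> b < a -> b < c -> a < a' -> c < c' ->
  b / (a' * c' - b ^+ 2) < b / (a * c - b ^+ 2).
Proof.
move=> b_gt0 *; rewrite ltr_pM2l // ltf_pV2 ?posrE ?coupled_det_gt0 //; try lra.
by nra.
Qed.

Lemma lt_min_half_margins b11 b22 b12 G1 G2 :
  b11 < G1 / 2 -> b22 < G2 / 2 -> b12 < Num.min G1 G2 / 2 ->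
  b12 < G1 - b11 /\ b12 < G2 - b22.
Proof. by move=> ? ?; rewrite ltr_pdivlMr // lt_min => /andP[? ?]; split; lra. Qed.

Lemma coupled_bounds_relax a b c (a' c' : R) x p q :
  0 <= b -> b < a -> b < c -> a < a' -> c < c' -> 0 <= x ->
  x <= b / (a' * c' - b ^+ 2) -> p <= (1 + b * x) / a' -> q <= (1 + b * x) / c' ->
  [/\ x <= b / (a * c - b ^+ 2), (0 < b -> x < b / (a * c - b ^+ 2)),
      p < a^-1 * (1 + b * x) & q < c^-1 * (1 + b * x)].
Proof.
move=> b_ge0 b_lt_a b_lt_c a_lt c_lt x_ge0 x_le p_le q_le.
have x_lt : 0 < b -> x < b / (a * c - b ^+ 2).
  by move=> b_gt0; apply: le_lt_trans x_le (coupled_bound_lt b_gt0 _ _ a_lt c_lt).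
have num_gt0 : 0 < 1 + b * x by rewrite ltr_pwDl ?ltr01 ?mulr_ge0.
have inv_lt u v : 0 < u -> u < v -> (1 + b * x) / v < u^-1 * (1 + b * x).
  move=> u_gt0 uv; have v_gt0 := lt_trans u_gt0 uv.
  by rewrite mulrC ltr_pM2r // ltf_pV2 ?posrE.
split=> //.
- move: b_ge0 x_le; rewrite le_eqVlt => /predU1P[<-|/x_lt/ltW//].
  by rewrite !mul0r.
- by apply: le_lt_trans p_le (inv_lt _ _ _ a_lt); apply: le_lt_trans b_lt_a.
- by apply: le_lt_trans q_le (inv_lt _ _ _ c_lt); apply: le_lt_trans b_lt_c.
Qed.

End RealInequalities.

Section EuclideanNorm.
Variables (R : realType) (n : nat).
Local Notation Re := (@complex.Re R).
Local Notation Im := (@complex.Im R).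
Implicit Types x y : 'cV[R[i]]_n.

Definition vnorm2 x : R := \sum_(i < n) (Re (x i 0) ^+ 2 + Im (x i 0) ^+ 2).

Definition rdot x y : R :=
  \sum_(i < n) (Re (x i 0) * Re (y i 0) + Im (x i 0) * Im (y i 0)).

Lemma vnorm2_ge0 x : 0 <= vnorm2 x.
Proof. by apply: sumr_ge0 => i _; rewrite addr_ge0 ?sqr_ge0. Qed.

Lemma vnorm_ge0 x : 0 <= vnorm x. Proof. exact: sqrtr_ge0. Qed.

Lemma sqr_vnorm x : vnorm x ^+ 2 = vnorm2 x.
Proof. by rewrite sqr_sqrtr // vnorm2_ge0. Qed.

Lemma vnorm2_rdot x : vnorm2 x = rdot x x.
Proof. by apply: eq_bigr => i _; rewrite !expr2. Qed.

Lemma vnorm2D x y : vnorm2 (x + y) = vnorm2 x + 2 * rdot x y + vnorm2 y.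
Proof.
rewrite /vnorm2 /rdot mulr_sumr -!big_split /=; apply: eq_bigr => i _.
by rewrite !mxE ReD ImD; ring.
Qed.

Lemma vnorm2_scaleD (s t : R) x y : vnorm2 (s%:C%C *: x + t%:C%C *: y) =
  s ^+ 2 * vnorm2 x + 2 * s * t * rdot x y + t ^+ 2 * vnorm2 y.
Proof.
rewrite /vnorm2 /rdot !mulr_sumr -!big_split /=; apply: eq_bigr => i _.
by rewrite !mxE ReD ImD !ReM !ImM /=; ring.
Qed.

Lemma vnorm2_eq0 x : vnorm2 x = 0 -> x = 0.
Proof.
move=> x0; apply/matrixP => i j; rewrite (ord1 j) mxE.
have entry_ge0 k : xpredT k -> 0 <= Re (x k 0) ^+ 2 + Im (x k 0) ^+ 2.
  by rewrite addr_ge0 ?sqr_ge0.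
move/eqP: (@psumr_eq0P _ _ xpredT _ entry_ge0 x0 i isT).
rewrite paddr_eq0 ?sqr_ge0 // !sqrf_eq0.
by case: (x i 0) => a b /andP[/eqP /= -> /eqP /= ->].
Qed.

Lemma vnorm0 : vnorm (0 : 'cV[R[i]]_n) = 0.
Proof.
by rewrite /vnorm big1 ?sqrtr0 // => i _; rewrite mxE /= expr0n addr0.
Qed.

Lemma vnorm_eq0 x : vnorm x = 0 -> x = 0.
Proof. by move=> x0; apply: vnorm2_eq0; rewrite -sqr_vnorm x0 expr0n. Qed.

Lemma cauchy_schwarz x y : rdot x y <= vnorm x * vnorm y.
Proof.
have [y0|y_neq0] := eqVneq (vnorm2 y) 0.
  rewrite (vnorm2_eq0 y0) vnorm0 mulr0 /rdot big1 // => i _.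
  by rewrite mxE /= !mulr0 addr0.
have y_gt0 : 0 < vnorm2 y by rewrite lt0r y_neq0 vnorm2_ge0.
have := vnorm2_ge0 ((vnorm2 y)%:C%C *: x + (- rdot x y)%:C%C *: y).
rewrite vnorm2_scaleD => comb_ge0.
have sqr_le : rdot x y ^+ 2 <= (vnorm x * vnorm y) ^+ 2.
  by rewrite exprMn !sqr_vnorm; nra.
apply: le_trans (ler_norm _) _.
by rewrite -ler_sqr ?nnegrE ?mulr_ge0 ?vnorm_ge0 // real_normK ?num_real.
Qed.

Lemma ler_vnormD x y : vnorm (x + y) <= vnorm x + vnorm y.
Proof.
have := cauchy_schwarz x y; have := vnorm2D x y; rewrite -!sqr_vnorm.
have := vnorm_ge0 x; have := vnorm_ge0 y; have := vnorm_ge0 (x + y); nra.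
Qed.

Lemma ler_vnormB x y : vnorm x - vnorm y <= vnorm (x - y).
Proof. by have := ler_vnormD (x - y) y; rewrite subrK; lra. Qed.

Lemma ler_vnorm_sum (I : Type) (r : seq I) (P : pred I) (F : I -> 'cV[R[i]]_n) :
  vnorm (\sum_(i <- r | P i) F i) <= \sum_(i <- r | P i) vnorm (F i).
Proof.
elim/big_rec2: _ => [|i u v _ uv]; first by rewrite vnorm0.
exact: le_trans (ler_vnormD _ _) (lerD _ uv).
Qed.

Lemma vnormZ (c : R[i]) x : vnorm (c *: x) = Normc.normc c * vnorm x.
Proof.
case: c => a b; rewrite /vnorm /= -sqrtrM ?addr_ge0 ?sqr_ge0 //; congr Num.sqrt.
by rewrite mulr_sumr; apply: eq_bigr => i _; rewrite !mxE !ReM !ImM /=; ring.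
Qed.

Lemma vnorm_scaler (s : R) x : vnorm (s%:C%C *: x) = `|s| * vnorm x.
Proof. by rewrite vnormZ /= expr0n addr0 sqrtr_sqr. Qed.

Lemma normc_le_vnorm x i : Normc.normc (x i 0) <= vnorm x.
Proof.
rewrite -[vnorm x]/(Num.sqrt (vnorm2 x)) /vnorm2 (bigD1 i) //=.
have rest_ge0 : 0 <= \sum_(k < n | k != i) (Re (x k 0) ^+ 2 + Im (x k 0) ^+ 2).
  by rewrite sumr_ge0 // => k _; rewrite addr_ge0 ?sqr_ge0.
by case: (x i 0) => a b /=; rewrite ler_sqrt ?lerDl ?addr_ge0 ?sqr_ge0.
Qed.

End EuclideanNorm.

Section OperatorNorm.
Variables (R : realType) (n : nat).
Implicit Types (x y : 'cV[R[i]]_n) (M N P : 'M[R[i]]_n).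

Local Notation image_ball M :=
  [set vnorm (M *m x) | x in [set x : 'cV[R[i]]_n | vnorm x <= 1]]%classic.

Lemma image_ball0 M : image_ball M 0.
Proof. by exists 0; rewrite /= ?vnorm0 ?ler01 // mulmx0 vnorm0. Qed.

Lemma has_sup_image_ball M : has_sup (image_ball M).
Proof.
split; first by exists 0; apply: image_ball0.
exists (\sum_(j < n) vnorm (M *m delta_mx j 0)) => _ [x /= x_le1 <-].
have -> : M *m x = \sum_(j < n) x j 0 *: (M *m delta_mx j 0).
  rewrite {1}(matrix_sum_delta x) mulmx_sumr; apply: eq_bigr => j _.
  by rewrite big_ord1 -scalemxAr.
apply: le_trans (ler_vnorm_sum _ _ _) (ler_sum _ _) => j _.
rewrite vnormZ -[leRHS]mul1r ler_wpM2r ?vnorm_ge0 //.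
exact: le_trans (normc_le_vnorm x j) x_le1.
Qed.

Lemma opnorm_ge0 M : 0 <= opnorm M.
Proof. by apply: (sup_upper_bound (has_sup_image_ball M)); apply: image_ball0. Qed.

Lemma opnorm_le M (K : R) :
  (forall x, vnorm x <= 1 -> vnorm (M *m x) <= K) -> opnorm M <= K.
Proof.
move=> MK; apply: ge_sup => [|_ [x /= x_le1 <-]]; last exact: MK.
by exists 0; apply: image_ball0.
Qed.

Lemma vnorm_mulmx_le M x : vnorm (M *m x) <= opnorm M * vnorm x.
Proof.
have [x0|x_neq0] := eqVneq (vnorm x) 0.
  by rewrite (vnorm_eq0 x0) mulmx0 vnorm0 mulr0.
have x_gt0 : 0 < vnorm x by rewrite lt0r x_neq0 vnorm_ge0.
have /(sup_upper_bound (has_sup_image_ball M)) :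
    image_ball M (vnorm (M *m ((vnorm x)^-1%:C%C *: x))).
  by exists ((vnorm x)^-1%:C%C *: x); rewrite //= vnorm_scaler gtr0_norm ?invr_gt0 ?mulVf.
rewrite -scalemxAr vnorm_scaler gtr0_norm ?invr_gt0 //.
by rewrite ler_pdivrMl // mulrC.
Qed.

Lemma adjmxM M N : adjmx (M *m N) = adjmx N *m adjmx M.
Proof. by rewrite /adjmx map_mxM trmx_mul. Qed.

Lemma adjmx1 : adjmx (1%:M : 'M[R[i]]_n) = 1%:M.
Proof. by rewrite /adjmx map_mx1 trmx1. Qed.

Lemma adjmxB M N : adjmx (M - N) = adjmx M - adjmx N.
Proof. by apply/matrixP => i j; rewrite !mxE rmorphB. Qed.

Lemma adjmxK M : adjmx (adjmx M) = M.
Proof. by apply/matrixP => i j; rewrite !mxE conjcK. Qed.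

Lemma rdot_adjmx M x y : rdot (adjmx M *m x) y = rdot x (M *m y).
Proof.
have rdotE u v : rdot u v = complex.Re (((map_mx conjc u)^T *m v) 0 0).
  rewrite mxE Re_sum; apply: eq_bigr => i _.
  by rewrite !mxE ReM ReJ ImJ; ring.
have conj_adjM : map_mx conjc (adjmx M) = M^T.
  by apply/matrixP => i j; rewrite !mxE conjcK.
rewrite !rdotE map_mxM conj_adjM.
by rewrite trmx_mul trmxK mulmxA.
Qed.

Lemma opnorm_adjmx_le M : opnorm (adjmx M) <= opnorm M.
Proof.
apply: opnorm_le => y y_le1; set z := adjmx M *m y.
have z_sqr : vnorm z ^+ 2 <= opnorm M * vnorm z.
  rewrite sqr_vnorm vnorm2_rdot {1}/z rdot_adjmx.
  apply: le_trans (cauchy_schwarz _ _) (le_trans (ler_wpM2l (vnorm_ge0 y) (vnorm_mulmx_le M z)) _).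
  by rewrite ler_piMl ?mulr_ge0 ?opnorm_ge0 ?vnorm_ge0.
exact: ler_of_sqr_le_mul (vnorm_ge0 z) (opnorm_ge0 M) z_sqr.
Qed.

Lemma vnorm_orth_proj_le P x : orth_proj P -> vnorm (P *m x) <= vnorm x.
Proof.
case=> P_herm P_idem; set z := P *m x.
have z_sqr : vnorm z ^+ 2 <= vnorm x * vnorm z.
  rewrite sqr_vnorm vnorm2_rdot {1}/z -{1}P_herm rdot_adjmx mulmxA P_idem.
  exact: cauchy_schwarz.
exact: ler_of_sqr_le_mul (vnorm_ge0 z) (vnorm_ge0 x) z_sqr.
Qed.

Lemma herm_invmx M : herm_mx M -> M \in unitmx -> herm_mx (invmx M).
Proof.
move=> M_herm M_unit; rewrite /herm_mx.
have adjM_inv : adjmx (invmx M) *m M = 1%:M.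
  by rewrite -{2}M_herm -adjmxM mulmxV // adjmx1.
by rewrite -[LHS]mulmx1 -(mulmxV M_unit) mulmxA adjM_inv mul1mx.
Qed.

Lemma opnorm_herm_offdiag P Q M : herm_mx P -> herm_mx Q -> herm_mx M ->
  opnorm (Q *m M *m P) = opnorm (P *m M *m Q).
Proof.
move=> P_herm Q_herm M_herm.
have adj_sandwich : adjmx (P *m M *m Q) = Q *m M *m P.
  by rewrite !adjmxM P_herm Q_herm M_herm mulmxA.
apply: le_anti; apply/andP; split; first by rewrite -adj_sandwich opnorm_adjmx_le.
by rewrite -{1}(adjmxK (P *m M *m Q)) adj_sandwich opnorm_adjmx_le.
Qed.

End OperatorNorm.

Section BlockEstimates.
Variables (R : realType) (n : nat).
Implicit Types (P Q A B M : 'M[R[i]]_n) (a b : R).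

Definition compl_proj P Q : Prop :=
  [/\ orth_proj P, orth_proj Q, P *m Q = 0, Q *m P = 0 & P + Q = 1%:M].

Lemma compl_projC P Q : compl_proj P Q -> compl_proj Q P.
Proof. by case=> *; split; rewrite // addrC. Qed.

Lemma compl_proj_subr P : orth_proj P -> compl_proj P (1%:M - P).
Proof.
case=> P_herm P_idem; split => //.
- split; first by rewrite /herm_mx adjmxB adjmx1 P_herm.
  by rewrite mulmxBl mul1mx mulmxBr mulmx1 P_idem subrr subr0.
- by rewrite mulmxBr mulmx1 P_idem subrr.
- by rewrite mulmxBl mul1mx P_idem subrr.
- by rewrite addrC subrK.
Qed.

Definition block_coercive P Q M a b : Prop :=
  forall v, a * vnorm (P *m v) - b * vnorm (Q *m v) <= vnorm (P *m (M *m v)).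

Lemma block_coerciveW P Q M a a' b b' : a' <= a -> b <= b' ->
  block_coercive P Q M a b -> block_coercive P Q M a' b'.
Proof.
move=> a'_le b_le PQM v; apply: le_trans (PQM v).
by rewrite lerB ?ler_wpM2r ?vnorm_ge0.
Qed.

Section BlockDiagonal.
Variables (P Q A : 'M[R[i]]_n).
Hypotheses (PQ : compl_proj P Q) (A_block : A = P *m A *m P + Q *m A *m Q).
Hypothesis A_unit : A \in unitmx.

Lemma block_diag_commute : P *m A = A *m P.
Proof.
case: PQ => [[_ P_idem] _ PQ0 QP0 _].
have -> : P *m A = P *m A *m P.
  by rewrite {1}A_block mulmxDr !mulmxA P_idem PQ0 !mul0mx addr0.
by rewrite {2}A_block mulmxDl -!mulmxA P_idem QP0 !mulmx0 addr0.
Qed.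

Lemma block_diag_vnorm_ge g v : 0 <= g -> g * opnorm (P *m invmx A *m P) <= 1 ->
  g * vnorm (P *m v) <= vnorm (P *m (A *m v)).
Proof.
case: PQ => [[_ P_idem] _ _ _ _] g_ge0 g_le.
have Pv : (P *m invmx A *m P) *m (P *m (A *m v)) = P *m v.
  rewrite -!mulmxA (mulmxA P P) P_idem (mulmxA P A) block_diag_commute.
  by rewrite -mulmxA !(mulmxA (invmx A)) mulVmx // mul1mx mulmxA P_idem.
have := vnorm_mulmx_le (P *m invmx A *m P) (P *m (A *m v)); rewrite Pv => Pv_le.
apply: le_trans (ler_wpM2l g_ge0 Pv_le) _.
by rewrite mulrA ler_piMl ?vnorm_ge0.
Qed.

Lemma block_coercive_subr B g : 0 <= g -> g * opnorm (P *m invmx A *m P) <= 1 ->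
  block_coercive P Q (A - B) (g - opnorm (P *m B *m P)) (opnorm (P *m B *m Q)).
Proof.
case: PQ => [[_ P_idem] [_ Q_idem] _ _ PQ1] g_ge0 g_le v.
have PBv : P *m (B *m v) = (P *m B *m P) *m (P *m v) + (P *m B *m Q) *m (Q *m v).
  rewrite -!mulmxA (mulmxA P P v) (mulmxA Q Q v) P_idem Q_idem.
  by rewrite -mulmxDr -mulmxDr -mulmxDl PQ1 mul1mx.
rewrite mulmxBl mulmxBr PBv opprD addrA; apply: le_trans (ler_vnormB _ _).
apply: lerB; last exact: vnorm_mulmx_le.
apply: le_trans (ler_vnormB _ _); rewrite mulrBl.
by apply: lerB; [exact: block_diag_vnorm_ge | exact: vnorm_mulmx_le].
Qed.

End BlockDiagonal.

Section CoerciveInverse.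
Variables (S1 S2 M : 'M[R[i]]_n) (a b c : R).
Hypotheses (S12 : compl_proj S1 S2) (b_ge0 : 0 <= b) (b_lt_a : b < a) (b_lt_c : b < c).
Hypotheses (M1 : block_coercive S1 S2 M a b) (M2 : block_coercive S2 S1 M c b).

Lemma block_coercive_unitmx : M \in unitmx.
Proof.
case: S12 => _ _ _ _ S12_1.
rewrite unitmxE unitfE -det_tr; apply/negP => /det0P [w w_neq0 wM0].
have Mw0 : M *m w^T = 0 by rewrite -[M]trmxK -trmx_mul wM0 trmx0.
have := M1 w^T; have := M2 w^T; rewrite Mw0 !mulmx0 vnorm0 => h2 h1.
have [/vnorm_eq0 S1w0 /vnorm_eq0 S2w0] :=
  coupled_le0_eq0 b_ge0 b_lt_a b_lt_c (vnorm_ge0 _) (vnorm_ge0 _) h1 h2.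
have : w^T = 0 by rewrite -[w^T]mul1mx -S12_1 mulmxDl S1w0 S2w0 addr0.
by move/(congr1 trmx); rewrite trmxK trmx0 => w0; rewrite w0 eqxx in w_neq0.
Qed.

Lemma opnorm_offdiag_invmx_le : opnorm (S1 *m invmx M *m S2) <= b / (a * c - b ^+ 2).
Proof.
case: S12 => _ [S2_herm S2_idem] S12_0 _ _.
apply: opnorm_le => x x_le1; set v := invmx M *m (S2 *m x).
have Mv : M *m v = S2 *m x by rewrite mulmxA mulmxV ?block_coercive_unitmx // mul1mx.
have := M1 v; have := M2 v; rewrite Mv !mulmxA S12_0 S2_idem mul0mx vnorm0.
have := le_trans (vnorm_orth_proj_le x (conj S2_herm S2_idem)) x_le1.
have -> : S1 *m invmx M *m S2 *m x = S1 *m v by rewrite /v !mulmxA.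
move=> Sx_le1 h2 h1.
exact: coupled_le_offdiag_bound b_ge0 b_lt_a b_lt_c (vnorm_ge0 _) h1 (le_trans h2 Sx_le1).
Qed.

Lemma opnorm_diag_invmx_le :
  opnorm (S1 *m invmx M *m S1) <= (1 + b * opnorm (S2 *m invmx M *m S1)) / a.
Proof.
case: S12 => [[S1_herm S1_idem] _ _ _ _].
apply: opnorm_le => x x_le1; set v := invmx M *m (S1 *m x).
have Mv : M *m v = S1 *m x by rewrite mulmxA mulmxV ?block_coercive_unitmx // mul1mx.
have := M1 v; rewrite Mv mulmxA S1_idem.
have := le_trans (vnorm_orth_proj_le x (conj S1_herm S1_idem)) x_le1.
have S2v_le : vnorm (S2 *m v) <= opnorm (S2 *m invmx M *m S1).
  apply: le_trans _ (ler_piMr (opnorm_ge0 _) x_le1).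
  by rewrite /v !mulmxA vnorm_mulmx_le.
have -> : S1 *m invmx M *m S1 *m x = S1 *m v by rewrite /v !mulmxA.
move=> Sx_le1 h1.
exact: coupled_le_diag_bound (le_lt_trans b_ge0 b_lt_a) b_ge0 S2v_le (le_trans h1 Sx_le1).
Qed.

End CoerciveInverse.

Lemma block_coercive_invmx_bounds S1 S2 M a b c :
  compl_proj S1 S2 -> herm_mx M -> 0 <= b -> b < a -> b < c ->
  block_coercive S1 S2 M a b -> block_coercive S2 S1 M c b ->
  let x12 := opnorm (S1 *m invmx M *m S2) in
  [/\ M \in unitmx, x12 <= b / (a * c - b ^+ 2),
      opnorm (S1 *m invmx M *m S1) <= (1 + b * x12) / a
    & opnorm (S2 *m invmx M *m S2) <= (1 + b * x12) / c].
Proof.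
move=> S12 M_herm b_ge0 b_lt_a b_lt_c M1 M2.
have [[S1_herm _] [S2_herm _] _ _ _] := S12.
have M_unit := block_coercive_unitmx S12 b_ge0 b_lt_a b_lt_c M1 M2.
have X_herm := herm_invmx M_herm M_unit.
split=> //; first exact: opnorm_offdiag_invmx_le S12 b_ge0 b_lt_a b_lt_c M1 M2.
  rewrite -(opnorm_herm_offdiag S1_herm S2_herm X_herm).
  exact: opnorm_diag_invmx_le S12 b_ge0 b_lt_a b_lt_c M1 M2.
exact: opnorm_diag_invmx_le (compl_projC S12) b_ge0 b_lt_c b_lt_a M2 M1.
Qed.
End BlockEstimates.

Theorem lemma3 (R : realType) (n : nat) (S1 S2 A B : 'M[R[i]]_n) (G1 G2 : R) :
  orth_proj S1 -> S2 = 1%:M - S1 ->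
  herm_mx A -> herm_mx B -> A \in unitmx ->
  A = S1 *m A *m S1 + S2 *m A *m S2 ->
  0 < G1 -> 0 < G2 ->
  opnorm (S1 *m invmx A *m S1) < G1^-1 ->
  opnorm (S2 *m invmx A *m S2) < G2^-1 ->
  let b11 := opnorm (S1 *m B *m S1) in
  let b22 := opnorm (S2 *m B *m S2) in
  let b12 := opnorm (S1 *m B *m S2) in
  b11 < G1 / 2 -> b22 < G2 / 2 -> b12 < Num.min G1 G2 / 2 ->
  let x12 := opnorm (S1 *m invmx (A - B) *m S2) in
  [/\ (A - B) \in unitmx,
      x12 <= b12 / ((G1 - b11) * (G2 - b22) - b12 ^+ 2),
      (0 < b12 -> x12 < b12 / ((G1 - b11) * (G2 - b22) - b12 ^+ 2)),
      opnorm (S1 *m invmx (A - B) *m S1) < (G1 - b11)^-1 * (1 + b12 * x12)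
    & opnorm (S2 *m invmx (A - B) *m S2) < (G2 - b22)^-1 * (1 + b12 * x12)].
Proof.
move=> S1_proj S2E A_herm B_herm A_unit A_block G1_gt0 G2_gt0 A1_lt A2_lt
  b11 b22 b12 b11_lt b22_lt b12_lt x12.
have S12 : compl_proj S1 S2 by rewrite S2E; apply: compl_proj_subr.
have [[S1_herm _] [S2_herm _] _ _ _] := S12.
have [g1 G1_lt_g1 g1_le] := exists_gt_mul_le1 G1_gt0 (opnorm_ge0 _) A1_lt.
have [g2 G2_lt_g2 g2_le] := exists_gt_mul_le1 G2_gt0 (opnorm_ge0 _) A2_lt.
have M1 : block_coercive S1 S2 (A - B) (g1 - b11) b12 :=
  block_coercive_subr S12 A_block A_unit B (ltW (lt_trans G1_gt0 G1_lt_g1)) g1_le.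
have M2 : block_coercive S2 S1 (A - B) (g2 - b22) b12.
  have A_block' : A = S2 *m A *m S2 + S1 *m A *m S1 by rewrite addrC.
  apply: block_coerciveW (lexx _) _ (block_coercive_subr (compl_projC S12) A_block'
    A_unit B (ltW (lt_trans G2_gt0 G2_lt_g2)) g2_le).
  by rewrite /b12 opnorm_herm_offdiag.
have b12_ge0 : 0 <= b12 := opnorm_ge0 _.
have [b12_lt_a b12_lt_c] := lt_min_half_margins b11_lt b22_lt b12_lt.
have a_lt : G1 - b11 < g1 - b11 by rewrite ltrD2r.
have c_lt : G2 - b22 < g2 - b22 by rewrite ltrD2r.
have AB_herm : herm_mx (A - B) by rewrite /herm_mx adjmxB A_herm B_herm.
have [AB_unit x12_le x11_le x22_le] := block_coercive_invmx_bounds S12 AB_herm b12_ge0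
  (lt_trans b12_lt_a a_lt) (lt_trans b12_lt_c c_lt) M1 M2.
have [x12_le' x12_lt x11_lt x22_lt] := coupled_bounds_relax b12_ge0 b12_lt_a b12_lt_c
  a_lt c_lt (opnorm_ge0 _) x12_le x11_le x22_le.
exact: And5 AB_unit x12_le' x12_lt x11_lt x22_lt.
Qed.
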